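(* An $\mathrm{FI}_G$-module $V$ is projective if and only if $V\cong\bigoplus_{i\ge0}M(W_i)$ where each $W_i$ is a projective $k[G_i]$-module. In particular, every projective $\mathrm{FI}_G$-module is relatively projective.
   Context: Fix a commutative ring $k$ and a group $G$. $\mathrm{FI}_G$ is the category with objects $[n]$ ($n\ge0$) and morphisms $[n]\to[m]$ the pairs $(f,g)$ with $f$ injective and $g:[n]\to G$ a map of sets; composition $(f,g)\circ(f',g')=(f\circ f',h)$, $h(x)=g'(x)\,g(f'(x))$. $G_n=\mathfrak S_n\wr G=\mathrm{Aut}_{\mathrm{FI}_G}([n])$. An $\mathrm{FI}_G$-module is a functor $V:\mathrm{FI}_G\to\mathrm{Mod}_k$ (projectivity is in the abelian category of all $\mathrm{FI}_G$-modules). For a $k[G_n]$-module $W$, $M(W)$ is the $\mathrm{FI}_G$-module with $M(W)_m=W\otimes_{k[G_n]}k[\mathrm{Hom}_{\mathrm{FI}_G}([n],[m])]$, morphisms acting by postcomposition on the second factor; modules of the form $\bigoplus_n M(W_n)$ are called relatively projective. *)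

From HB Require Import structures.
From mathcomp Require Import all_boot all_algebra.



Unset Printing Implicit Defensive.

Import GRing.Theory.
Local Open Scope ring_scope.

Record FIGhom (G : groupType) (n m : nat) := FIGHom {
  fig_f : {ffun 'I_n -> 'I_m};
  fig_inj : injectiveb fig_f;
  fig_g : {ffun 'I_n -> G}
}.
Arguments FIGHom {G n m}.
Arguments fig_f {G n m}.
Arguments fig_inj {G n m}.
Arguments fig_g {G n m}.

Lemma fig_comp_inj {G : groupType} {n m p} (x : FIGhom G m p) (y : FIGhom G n m) :
  injectiveb [ffun i => fig_f x (fig_f y i)].
Proof.
apply/injectiveP => i j; rewrite !ffunE => /(injectiveP _ (fig_inj x)).
exact: (injectiveP _ (fig_inj y)).
Qed.

Definition fig_comp {G : groupType} {n m p} (x : FIGhom G m p) (y : FIGhom G n m)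
  : FIGhom G n p :=
  @FIGHom G n p [ffun i => fig_f x (fig_f y i)] (fig_comp_inj x y)
    [ffun i => (fig_g y i * fig_g x (fig_f y i))%g].

Lemma fig_id_inj n : injectiveb [ffun i : 'I_n => i].
Proof. by apply/injectiveP => i j; rewrite !ffunE. Qed.

Definition fig_id (G : groupType) n : FIGhom G n n :=
  @FIGHom G n n [ffun i => i] (fig_id_inj n) [ffun _ => 1%g].

(* G_n = S_n wr G = Aut_{FI_G}([n]) : every endomorphism of [n] in FI_G is an
   automorphism (an injective self-map of a finite set is bijective, and
   (f,g) has inverse (f^-1, x |-> g(f^-1 x)^-1)), so the elements of G_n are
   exactly the elements of FIGhom G n n, with the FI_G composition. *)

Record FIGmod (k : comPzRingType) (G : groupType) := FIGMod {
  figV :> nat -> lmodType k;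
  figact : forall n m, FIGhom G n m -> figV n -> figV m;
  figact_lin : forall n m (x : FIGhom G n m), linear (figact n m x);
  figact_id : forall n (v : figV n), figact n n (fig_id G n) v = v;
  figact_comp : forall n m p (x : FIGhom G m p) (y : FIGhom G n m) (v : figV n),
      figact n p (fig_comp x y) v = figact m p x (figact n m y v)
}.
Arguments figV {k G}.
Arguments figact {k G} _ {n m}.

Record FIGmor (k : comPzRingType) (G : groupType) (V W : FIGmod k G) := FIGMor {
  figmor :> forall n, V n -> W n;
  figmor_lin : forall n : nat, linear (figmor n);
  figmor_nat : forall n m (x : FIGhom G n m) (v : V n),
      figmor m (figact V x v) = figact W x (figmor n v)
}.
Arguments FIGmor {k G}.
Arguments figmor {k G V W}.

(* projective object of the abelian category of all FI_G-modules: morphisms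
   from V lift along every epimorphism (= degreewise surjective morphism). *)
Definition FIG_projective {k : comPzRingType} {G : groupType} (V : FIGmod k G)
  : Prop :=
  forall (U W : FIGmod k G) (p : FIGmor U W) (f : FIGmor V W),
    (forall n (w : W n), exists u : U n, p n u = w) ->
    exists h : FIGmor V U, forall n (v : V n), p n (h n v) = f n v.

Record GnMod (k : comPzRingType) (G : groupType) (n : nat) := GnModule {
  gnW :> lmodType k;
  gnact : FIGhom G n n -> gnW -> gnW;
  gnact_lin : forall s, linear (gnact s);
  gnact_id : forall w, gnact (fig_id G n) w = w;
  gnact_comp : forall s t w, gnact (fig_comp s t) w = gnact s (gnact t w)
}.
Arguments gnW {k G n}.
Arguments gnact {k G n}.

Definition Gn_hom {k : comPzRingType} {G : groupType} {n : nat}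
  {A B : GnMod k G n} (h : A -> B) : Prop :=
  linear h /\ forall s a, h (gnact A s a) = gnact B s (h a).

Definition Gn_projective {k : comPzRingType} {G : groupType} {n : nat}
  (P : GnMod k G n) : Prop :=
  forall (A B : GnMod k G n) (p : A -> B) (f : P -> B),
    Gn_hom p -> Gn_hom f -> (forall b, exists a, p a = b) ->
    exists h : P -> A, Gn_hom h /\ forall x, p (h x) = f x.

(* V ~= (+)_{i >= 0} M(W_i),  M(W)_m = W (x)_{k[G_i]} k[Hom([i],[m])].        *)
(* Tensor products and infinite direct sums of modules are not available in  *)
(* MathComp; the isomorphism V ~= (+)_i M(W_i) is expressed through the      *)
(* universal properties of (+) and (x):  there are maps                      *)
(*   beta i m : Hom([i],[m]) -> W_i -> V_m   ("x (x) w |-> image of w (x) x")  *)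
(* which are k-linear in w, G_i-balanced, compatible with the FI_G-action    *)
(* (morphisms act on M(W_i) by postcomposition on the Hom factor), and such  *)
(* that for each m, V_m together with (beta i m)_i is the direct sum over i  *)
(* of the tensor products W_i (x)_{k[G_i]} k[Hom([i],[m])]: every family of  *)
(* balanced maps Hom([i],[m]) x W_i -> T, k-linear in W_i, factors uniquely  *)
(* through a k-linear map V_m -> T.                                          *)
(* Balancedness convention: W_i is a left k[G_i]-module and G_i acts on      *)
(* Hom([i],[m]) on the right by precomposition, so the tensor relation is    *)
(*   (x o s) (x) w = x (x) (s . w).                                          *)

Definition balanced_family {k : comPzRingType} {G : groupType}
  {W : forall i, GnMod k G i} {m : nat} {T : lmodType k}
  (gamma : forall i, FIGhom G i m -> W i -> T) : Prop :=
  (forall i (x : FIGhom G i m), linear (gamma i x)) /\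
  (forall i (x : FIGhom G i m) (s : FIGhom G i i) (w : W i),
      gamma i (fig_comp x s) w = gamma i x (gnact (W i) s w)).

Definition is_sum_of_M {k : comPzRingType} {G : groupType} (V : FIGmod k G)
  (W : forall i, GnMod k G i) : Prop :=
  exists beta : forall i m, FIGhom G i m -> W i -> V m,
    (forall m, balanced_family (fun i => beta i m)) /\
    (forall i m p (h : FIGhom G m p) (x : FIGhom G i m) (w : W i),
        figact V h (beta i m x w) = beta i p (fig_comp h x) w) /\
    (forall m (T : lmodType k) (gamma : forall i, FIGhom G i m -> W i -> T),
        balanced_family gamma ->
        exists u : V m -> T,
          [/\ linear u,
              (forall i x w, u (beta i m x w) = gamma i x w) &
              (forall u' : V m -> T, linear u' ->
                 (forall i x w, u' (beta i m x w) = gamma i x w) ->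
                 forall v, u' v = u v)]).

Definition FIG_rel_projective {k : comPzRingType} {G : groupType}
  (V : FIGmod k G) : Prop :=
  exists W : forall i, GnMod k G i, is_sum_of_M V W.

From HB Require Import structures.
From mathcomp Require Import all_boot all_algebra.
From mathcomp Require Import boolp.

(* A projective V is generated by the pieces H0 V j := V_j / (images of all V_i,
   i < j).  Lifting the projection V_j -> H0 V j, seen as a morphism into the
   FI_G-module concentrated in degree j, through V_j concentrated in degree j
   yields a G_j-equivariant splitting of it that kills the lower images; the
   same lifting argument shows that H0 V j is a projective k[G_j]-module.  The
   splittings define a surjection (+)_j M(H0 V j) -> V, which has a right
   inverse since V is projective, and this right inverse is a two-sided inverse
   by induction on the degree.  Conversely a morphism out of (+)_i M(W_i) is
   the same as a family of G_i-maps out of the W_i, so it lifts when the W_i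
   are projective.  The module (+)_i M(W_i) is built from its universal
   property: lists of formal generators x ⊗ w modulo the relations detected by
   all balanced families. *)

Set Implicit Arguments.
Unset Strict Implicit.
Unset Printing Implicit Defensive.
Import GRing.Theory.
Local Open Scope ring_scope.

Arguments figact_lin {k G} f {n m}.
Arguments figact_id {k G} f {n}.
Arguments figact_comp {k G} f {n m p}.
Arguments gnact_lin {k G n}.
Arguments gnact_id {k G n}.
Arguments gnact_comp {k G n}.
Arguments figmor_lin {k G V W} f n.
Arguments figmor_nat {k G V W} f {n m}.

Record prelmod (k : pzRingType) := PreLmod {
  pl_carrier : Type;
  pl_rel : pl_carrier -> pl_carrier -> Prop;
  pl_zero : pl_carrier;
  pl_add : pl_carrier -> pl_carrier -> pl_carrier;
  pl_opp : pl_carrier -> pl_carrier;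
  pl_scale : k -> pl_carrier -> pl_carrier;
  pl_refl : forall x, pl_rel x x;
  pl_sym : forall x y, pl_rel x y -> pl_rel y x;
  pl_trans : forall x y z, pl_rel x y -> pl_rel y z -> pl_rel x z;
  pl_addR : forall x x' y y', pl_rel x x' -> pl_rel y y' ->
    pl_rel (pl_add x y) (pl_add x' y');
  pl_oppR : forall x x', pl_rel x x' -> pl_rel (pl_opp x) (pl_opp x');
  pl_scaleR : forall a x x', pl_rel x x' -> pl_rel (pl_scale a x) (pl_scale a x');
  pl_addA : forall x y z, pl_rel (pl_add x (pl_add y z)) (pl_add (pl_add x y) z);
  pl_addC : forall x y, pl_rel (pl_add x y) (pl_add y x);
  pl_add0 : forall x, pl_rel (pl_add pl_zero x) x;
  pl_addN : forall x, pl_rel (pl_add (pl_opp x) x) pl_zero;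
  pl_scaleA : forall a b x, pl_rel (pl_scale a (pl_scale b x)) (pl_scale (a * b) x);
  pl_scale1 : forall x, pl_rel (pl_scale 1 x) x;
  pl_scaleDr : forall a x y,
    pl_rel (pl_scale a (pl_add x y)) (pl_add (pl_scale a x) (pl_scale a y));
  pl_scaleDl : forall a b x,
    pl_rel (pl_scale (a + b) x) (pl_add (pl_scale a x) (pl_scale b x)) }.

Section Quotient.
Variables (k : pzRingType) (P : prelmod k).
Local Notation X := (pl_carrier P).
Local Notation R := (@pl_rel k P).

(* Classes are represented as predicates, so no decidability of [R] is
   needed, only propositional and functional extensionality. *)
Record quot : Type := Quot { qclass : X -> Prop; qclassP : exists x, qclass = R x }.

Definition qpi x := Quot (ex_intro (fun y => R x = R y) x erefl).
Definition qrepr (q : quot) : X := sval (cid (qclassP q)).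

Lemma quot_eq (q1 q2 : quot) : qclass q1 = qclass q2 -> q1 = q2.
Proof.
case: q1 q2 => [c1 p1] [c2 p2] /= e; subst c2.
by rewrite (Prop_irrelevance p1 p2).
Qed.

Lemma qreprK q : qpi (qrepr q) = q.
Proof. by apply: quot_eq; rewrite /qrepr /=; case: (cid _) => x /= ->. Qed.

Lemma qpiP x y : qpi x = qpi y <-> R x y.
Proof.
split=> [e | r].
  by have: qclass (qpi x) y by rewrite e; apply: pl_refl.
apply: quot_eq; apply: funext => z; apply: propext.
by split=> /= h; [apply: pl_trans (pl_sym r) h | apply: pl_trans r h].
Qed.

Lemma qreprR x : R (qrepr (qpi x)) x.
Proof. by apply/qpiP; rewrite qreprK. Qed.

Lemma quot_ind (Q : quot -> Prop) : (forall x, Q (qpi x)) -> forall q, Q q.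
Proof. by move=> h q; rewrite -(qreprK q). Qed.

Definition qadd q1 q2 := qpi (pl_add (qrepr q1) (qrepr q2)).
Definition qopp q := qpi (pl_opp (qrepr q)).
Definition qscale a q := qpi (pl_scale a (qrepr q)).

Lemma qaddE x y : qadd (qpi x) (qpi y) = qpi (pl_add x y).
Proof. by apply/qpiP; apply: pl_addR; apply: qreprR. Qed.
Lemma qoppE x : qopp (qpi x) = qpi (pl_opp x).
Proof. by apply/qpiP; apply: pl_oppR; apply: qreprR. Qed.
Lemma qscaleE a x : qscale a (qpi x) = qpi (pl_scale a x).
Proof. by apply/qpiP; apply: pl_scaleR; apply: qreprR. Qed.

Lemma qaddA : associative qadd.
Proof.
by elim/quot_ind=> x; elim/quot_ind=> y; elim/quot_ind=> z;
  rewrite !qaddE; apply/qpiP; apply: pl_addA.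
Qed.
Lemma qaddC : commutative qadd.
Proof.
by elim/quot_ind=> x; elim/quot_ind=> y; rewrite !qaddE; apply/qpiP; apply: pl_addC.
Qed.
Lemma qadd0 : left_id (qpi (pl_zero P)) qadd.
Proof. by elim/quot_ind=> x; rewrite qaddE; apply/qpiP; apply: pl_add0. Qed.
Lemma qaddN : left_inverse (qpi (pl_zero P)) qopp qadd.
Proof. by elim/quot_ind=> x; rewrite qoppE qaddE; apply/qpiP; apply: pl_addN. Qed.

HB.instance Definition _ := gen_eqMixin quot.
HB.instance Definition _ := gen_choiceMixin quot.
HB.instance Definition _ := GRing.isZmodule.Build quot qaddA qaddC qadd0 qaddN.

Lemma qpiD x y : qpi (pl_add x y) = qpi x + qpi y.
Proof. by rewrite -qaddE. Qed.

Lemma qscaleA a b q : qscale a (qscale b q) = qscale (a * b) q.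
Proof. by elim/quot_ind: q => x; rewrite !qscaleE; apply/qpiP; apply: pl_scaleA. Qed.
Lemma qscale1 : left_id 1 qscale.
Proof. by elim/quot_ind=> x; rewrite qscaleE; apply/qpiP; apply: pl_scale1. Qed.
Lemma qscaleDr : right_distributive qscale +%R.
Proof.
move=> a; elim/quot_ind=> x; elim/quot_ind=> y.
by rewrite -qpiD !qscaleE -qpiD; apply/qpiP; apply: pl_scaleDr.
Qed.
Lemma qscaleDl q : {morph qscale^~ q : a b / a + b}.
Proof.
by elim/quot_ind: q => x a b; rewrite !qscaleE -qpiD; apply/qpiP; apply: pl_scaleDl.
Qed.

HB.instance Definition _ :=
  GRing.Zmodule_isLmodule.Build k quot qscaleA qscale1 qscaleDr qscaleDl.

Lemma qpiZ a x : qpi (pl_scale a x) = a *: qpi x.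
Proof. by rewrite -qscaleE. Qed.

Lemma qpi0 : qpi (pl_zero P) = 0.
Proof. by []. Qed.

End Quotient.

Section LinearFunctions.
Variables (k : pzRingType) (U W : lmodType k) (f : U -> W).
Hypothesis lin_f : linear f.

Lemma lin_add u v : f (u + v) = f u + f v.
Proof. by have := lin_f 1 u v; rewrite !scale1r. Qed.
Lemma lin0 : f 0 = 0.
Proof. by apply: (@addrI _ (f 0)); rewrite -lin_add !addr0. Qed.
Lemma lin_opp u : f (- u) = - f u.
Proof. by apply/eqP; rewrite -addr_eq0 -lin_add addNr lin0. Qed.
Lemma lin_sub u v : f (u - v) = f u - f v.
Proof. by rewrite lin_add lin_opp. Qed.
Lemma lin_scale a u : f (a *: u) = a *: f u.
Proof. by have := lin_f a u 0; rewrite !addr0 lin0 addr0. Qed.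
Lemma lin_sum I (r : seq I) (F : I -> U) :
  f (\sum_(i <- r) F i) = \sum_(i <- r) f (F i).
Proof. exact: (big_morph f lin_add lin0). Qed.

End LinearFunctions.

Lemma linear_comp (k : pzRingType) (U V W : lmodType k) (f : V -> W) (g : U -> V) :
  linear f -> linear g -> linear (f \o g).
Proof. by move=> lf lg a u v /=; rewrite lg lf. Qed.

Section FIGCategory.
Variable G : groupType.

Lemma fig_eq n m (x y : FIGhom G n m) :
  fig_f x = fig_f y -> fig_g x = fig_g y -> x = y.
Proof.
case: x y => f1 i1 g1 [f2 i2 g2] /= ef eg; subst f2 g2.
by rewrite (eq_irrelevance i1 i2).
Qed.

Lemma fig_compA n m p q (x : FIGhom G p q) (y : FIGhom G m p) (z : FIGhom G n m) :
  fig_comp x (fig_comp y z) = fig_comp (fig_comp x y) z.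
Proof. by apply: fig_eq; apply/ffunP => i; rewrite !ffunE //= mulgA. Qed.

Lemma fig_comp1 n m (x : FIGhom G n m) : fig_comp x (fig_id G n) = x.
Proof. by apply: fig_eq; apply/ffunP => i; rewrite !ffunE //= ?ffunE ?mul1g ?mulg1. Qed.

Lemma fig_1comp n m (x : FIGhom G n m) : fig_comp (fig_id G m) x = x.
Proof. by apply: fig_eq; apply/ffunP => i; rewrite !ffunE //= ?ffunE ?mul1g ?mulg1. Qed.

Lemma fig_hom_leq n m (x : FIGhom G n m) : (n <= m)%N.
Proof.
by have := leq_card (fig_f x) (injectiveP _ (fig_inj x)); rewrite !card_ord.
Qed.

Lemma fig_endo_deg n m (x : FIGhom G n m) : (m <= n)%N -> n = m.
Proof. by move=> lemn; apply/eqP; rewrite eqn_leq (fig_hom_leq x). Qed.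

End FIGCategory.

Section ModuleActions.
Variables (k : comPzRingType) (G : groupType).

Lemma figactD (V : FIGmod k G) n m (x : FIGhom G n m) :
  {morph figact V x : u v / u + v}.
Proof. by move=> u v; rewrite (lin_add (figact_lin V x)). Qed.
Lemma figactZ (V : FIGmod k G) n m (x : FIGhom G n m) a u :
  figact V x (a *: u) = a *: figact V x u.
Proof. by rewrite (lin_scale (figact_lin V x)). Qed.

Lemma gnactD n (A : GnMod k G n) s : {morph gnact A s : u v / u + v}.
Proof. by move=> u v; rewrite (lin_add (gnact_lin A s)). Qed.
Lemma gnactZ n (A : GnMod k G n) s a u : gnact A s (a *: u) = a *: gnact A s u.
Proof. by rewrite (lin_scale (gnact_lin A s)). Qed.
Lemma gnact0 n (A : GnMod k G n) s : gnact A s 0 = 0.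
Proof. by rewrite (lin0 (gnact_lin A s)). Qed.

End ModuleActions.

(* The formal generator [thom ⊗ tvec] of [M(F tdeg)_m]; lists of them stand for
   finite sums. *)
Record figterm (G : groupType) (F : nat -> Type) (m : nat) :=
  FIGterm { tdeg : nat; thom : FIGhom G tdeg m; tvec : F tdeg }.

Section LowerSpan.
Variables (k : comPzRingType) (G : groupType) (V : FIGmod k G).

Definition Vcarrier (i : nat) : Type := V i.

Definition term_sum j (s : seq (figterm G Vcarrier j)) : V j :=
  \sum_(t <- s) figact V (thom t) (tvec t).

Definition lower j (v : V j) : Prop :=
  exists2 s : seq (figterm G Vcarrier j), all (fun t => tdeg t < j)%N s & v = term_sum s.

Lemma lower0 j : lower (0 : V j).
Proof. by exists [::]; rewrite // /term_sum big_nil. Qed.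

Lemma lowerD j (u v : V j) : lower u -> lower v -> lower (u + v).
Proof.
move=> [s hs ->] [t ht ->]; exists (s ++ t); first by rewrite all_cat hs ht.
by rewrite /term_sum big_cat.
Qed.

Lemma lowerZ j a (v : V j) : lower v -> lower (a *: v).
Proof.
move=> [s hs ->].
exists [seq FIGterm (thom t) (a *: (tvec t : V (tdeg t))) | t <- s].
  by rewrite all_map.
by rewrite /term_sum big_map scaler_sumr; apply: eq_bigr => t _; rewrite figactZ.
Qed.

Lemma lowerN j (v : V j) : lower v -> lower (- v).
Proof. by rewrite -scaleN1r; apply: lowerZ. Qed.

Lemma lower_act_lt i j (y : FIGhom G i j) v : (i < j)%N -> lower (figact V y v).
Proof.
by move=> lt_ij; exists [:: FIGterm y v]; rewrite /= ?lt_ij // /term_sum big_seq1.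
Qed.

Lemma lower_act j m (y : FIGhom G j m) v : lower v -> lower (figact V y v).
Proof.
move=> [s hs ->]; exists [seq FIGterm (fig_comp y (thom t)) (tvec t) | t <- s].
  by rewrite all_map; apply: sub_all hs => t /= /leq_trans; apply; apply: fig_hom_leq y.
rewrite /term_sum (lin_sum (figact_lin V y)) big_map.
by apply: eq_bigr => t _; rewrite figact_comp.
Qed.

Definition lower_rel j (u v : V j) := lower (u - v).

Lemma lower_rel_eq j (u v : V j) : u = v -> lower_rel u v.
Proof. by move=> ->; rewrite /lower_rel subrr; apply: lower0. Qed.

Definition H0_prelmod (j : nat) : prelmod k.
refine (@PreLmod k (V j) (@lower_rel j) 0 +%R -%R *:%R
  _ _ _ _ _ _ _ _ _ _ _ _ _ _).
- by move=> x; apply: lower_rel_eq.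
- by move=> x y h; rewrite /lower_rel -opprB; apply: lowerN.
- by move=> x y z h1 h2; rewrite /lower_rel -(subrKA y); apply: lowerD.
- by move=> x x' y y' h1 h2; rewrite /lower_rel opprD addrACA; apply: lowerD.
- by move=> x x' h; rewrite /lower_rel -opprD; apply: lowerN.
- by move=> a x x' h; rewrite /lower_rel -scalerBr; apply: lowerZ.
- by move=> *; apply: lower_rel_eq; rewrite addrA.
- by move=> *; apply: lower_rel_eq; rewrite addrC.
- by move=> *; apply: lower_rel_eq; rewrite add0r.
- by move=> *; apply: lower_rel_eq; rewrite addNr.
- by move=> *; apply: lower_rel_eq; rewrite scalerA.
- by move=> *; apply: lower_rel_eq; rewrite scale1r.
- by move=> *; apply: lower_rel_eq; rewrite scalerDr.
- by move=> *; apply: lower_rel_eq; rewrite scalerDl.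
Defined.

Definition H0 j : lmodType k := quot (H0_prelmod j).
Definition H0pi j (v : V j) : H0 j := @qpi _ (H0_prelmod j) v.
Definition H0repr j (c : H0 j) : V j := @qrepr _ (H0_prelmod j) c.

Lemma H0piP j (u v : V j) : H0pi u = H0pi v <-> lower (u - v).
Proof. exact: qpiP. Qed.
Lemma H0reprK j (c : H0 j) : H0pi (H0repr c) = c.
Proof. exact: qreprK. Qed.
Lemma H0_ind j (P : H0 j -> Prop) : (forall v, P (H0pi v)) -> forall c, P c.
Proof. exact: (@quot_ind _ (H0_prelmod j)). Qed.
Lemma H0pi_linear j : linear (@H0pi j).
Proof. by move=> a u v; rewrite -(@qpiZ _ (H0_prelmod j)) -(@qpiD _ (H0_prelmod j)). Qed.
Lemma H0pi_lower j (v : V j) : lower v -> H0pi v = 0.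
Proof. by move=> h; rewrite -(@qpi0 _ (H0_prelmod j)); apply/H0piP; rewrite subr0. Qed.

Definition H0act j (s : FIGhom G j j) (c : H0 j) : H0 j := H0pi (figact V s (H0repr c)).

Lemma H0actE j (s : FIGhom G j j) v : H0act s (H0pi v) = H0pi (figact V s v).
Proof.
apply/H0piP; rewrite -(lin_sub (figact_lin V s)); apply: lower_act.
by apply/H0piP; rewrite H0reprK.
Qed.

Definition H0mod (j : nat) : GnMod k G j.
refine (@GnModule k G j (H0 j) (@H0act j) _ _ _).
- move=> s a; elim/H0_ind=> u; elim/H0_ind=> v.
  rewrite -(lin_scale (@H0pi_linear j)) -(lin_add (@H0pi_linear j)) !H0actE.
  by rewrite figactD figactZ (lin_add (@H0pi_linear j)) (lin_scale (@H0pi_linear j)).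
- by elim/H0_ind=> v; rewrite H0actE figact_id.
- by move=> s t; elim/H0_ind=> v; rewrite !H0actE figact_comp.
Defined.

End LowerSpan.

Lemma ord_bool_true (b : bool) (i : 'I_b) : b.
Proof. by case: b i => // -[]. Qed.

Lemma sum_ord_bool (M : nmodType) (b : bool) (i0 : 'I_b) (F : 'I_b -> M) :
  \sum_(i : 'I_b) F i = F i0.
Proof.
rewrite (bigD1 i0) //= big1 ?addr0 // => i /negP[]; apply/eqP/val_inj.
by case: b i i0 {F} => [] [[|?] ?] [[|?] ?].
Qed.

Lemma sum_ord_false (M : nmodType) (b : bool) (F : 'I_b -> M) :
  ~~ b -> \sum_(i : 'I_b) F i = 0.
Proof. by move=> /negPf nb; rewrite big1 // => i; have := ord_bool_true i; rewrite nb. Qed.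

Section Concentrated.
Variables (k : comPzRingType) (G : groupType) (j : nat).

(* [endo_cast x] is [x] when [n = m = j] and an arbitrary endomorphism otherwise. *)
Definition endo_cast n m (x : FIGhom G n m) : FIGhom G j j :=
  match n =P j, m =P j with
  | ReflectT en, ReflectT em =>
      eq_rect m (FIGhom G j) (eq_rect n (fun n' => FIGhom G n' m) x j en) j em
  | _, _ => fig_id G j
  end.

Lemma endo_cast_id (x : FIGhom G j j) : endo_cast x = x.
Proof. by rewrite /endo_cast; case: eqP => // e; rewrite (eq_irrelevance e erefl). Qed.

Definition ord_eqxx : 'I_(j == j) := @Ordinal (j == j) 0 ltac:(by rewrite eqxx).

Variable A : GnMod k G j.

(* The FI_G-module that is [A] in degree [j] and [0] elsewhere; the index
   type ['I_(m == j)] has one element when [m = j] and none otherwise. *)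
Definition conc_space (m : nat) : lmodType k := {ffun 'I_(m == j) -> A}.

Definition conc_act n m (x : FIGhom G n m) (phi : conc_space n) : conc_space m :=
  [ffun _ => \sum_(i : 'I_(n == j)) gnact A (endo_cast x) (phi i)].

Lemma conc_act_lin n m (x : FIGhom G n m) : linear (conc_act x).
Proof.
move=> a u v; apply/ffunP => i; rewrite !ffunE scaler_sumr -big_split /=.
by apply: eq_bigr => i' _; rewrite !ffunE gnactD gnactZ.
Qed.

Lemma conc_act_id n (phi : conc_space n) : conc_act (fig_id G n) phi = phi.
Proof.
apply/ffunP => i; rewrite ffunE; have /eqP nj := ord_bool_true i; subst n.
by rewrite (sum_ord_bool i) endo_cast_id gnact_id.
Qed.

Lemma conc_act_comp n m p (x : FIGhom G m p) (y : FIGhom G n m) (phi : conc_space n) :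
  conc_act (fig_comp x y) phi = conc_act x (conc_act y phi).
Proof.
apply/ffunP => i; rewrite !ffunE; have /eqP pj := ord_bool_true i; subst p.
have [nj | nj] : n = j \/ n <> j by case: (n =P j); [left | right].
  subst n; have mj := fig_endo_deg x (fig_hom_leq y); subst m.
  by rewrite !(sum_ord_bool i) ffunE (sum_ord_bool i) !endo_cast_id gnact_comp.
have nj' : ~~ (n == j) by apply/eqP.
rewrite (sum_ord_false _ nj') big1 // => i' _.
by rewrite ffunE (sum_ord_false _ nj') gnact0.
Qed.

Definition conc : FIGmod k G :=
  @FIGMod k G conc_space conc_act conc_act_lin conc_act_id conc_act_comp.

End Concentrated.

Arguments ord_eqxx {j}.

Definition deg_module (k : comPzRingType) (G : groupType) (V : FIGmod k G) j
  : GnMod k G j :=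
  @GnModule k G j (V j) (@figact k G V j j) (figact_lin V) (figact_id V) (figact_comp V).

Section ConcentratedMorphisms.
Variables (k : comPzRingType) (G : groupType) (j : nat).

Section Map.
Variables (A B : GnMod k G j) (p : A -> B).
Hypothesis p_hom : Gn_hom p.

Definition conc_map_fun m (phi : conc A m) : conc B m := [ffun i => p (phi i)].

Lemma conc_map_lin m : linear (@conc_map_fun m).
Proof.
case: p_hom => p_lin _ a u v; apply/ffunP => i.
by rewrite !ffunE (lin_add p_lin) (lin_scale p_lin).
Qed.

Lemma conc_map_nat n m (x : FIGhom G n m) (phi : conc A n) :
  conc_map_fun (figact (conc A) x phi) = figact (conc B) x (conc_map_fun phi).
Proof.
case: p_hom => p_lin p_eq; apply/ffunP => i; rewrite !ffunE (lin_sum p_lin).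
by apply: eq_bigr => i' _; rewrite ffunE p_eq.
Qed.

Definition conc_map : FIGmor (conc A) (conc B) :=
  @FIGMor k G (conc A) (conc B) conc_map_fun conc_map_lin conc_map_nat.

Lemma conc_map_surj : (forall b, exists a, p a = b) ->
  forall m (w : conc B m), exists u, conc_map m u = w.
Proof.
move=> p_surj m w; exists [ffun i => sval (cid (p_surj (w i)))].
by apply/ffunP => i; rewrite !ffunE; case: (cid _).
Qed.

End Map.

Variable V : FIGmod k G.

(* [deg_cast v] is [v] when [v] has degree [j] and [0] otherwise. *)
Definition deg_cast m (v : V m) : V j :=
  match m =P j with
  | ReflectT e => eq_rect m (fun m' => (V m' : Type)) v j e
  | ReflectF _ => 0
  end.

Lemma deg_cast_id (v : V j) : deg_cast v = v.
Proof. by rewrite /deg_cast; case: eqP => // e; rewrite (eq_irrelevance e erefl). Qed.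

Section ToConc.
Variables (A : GnMod k G j) (g : V j -> A).
Hypotheses (g_lin : linear g) (g_eq : forall s v, g (figact V s v) = gnact A s (g v))
  (g_lower : forall i (y : FIGhom G i j) v, (i < j)%N -> g (figact V y v) = 0).

Definition to_conc_fun m (v : V m) : conc A m := [ffun _ => g (deg_cast v)].

Lemma to_conc_lin m : linear (@to_conc_fun m).
Proof.
move=> a u v; apply/ffunP => i; rewrite !ffunE.
have /eqP mj := ord_bool_true i; subst m.
by rewrite !deg_cast_id (lin_add g_lin) (lin_scale g_lin).
Qed.

Lemma to_conc_nat n m (x : FIGhom G n m) (v : V n) :
  to_conc_fun (figact V x v) = figact (conc A) x (to_conc_fun v).
Proof.
apply/ffunP => i; rewrite /= !ffunE; have /eqP mj := ord_bool_true i; subst m.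
have [nj | nj] : n = j \/ n <> j by case: (n =P j); [left | right].
  by subst n; rewrite (sum_ord_bool i) ffunE !deg_cast_id endo_cast_id g_eq.
have nj' : ~~ (n == j) by apply/eqP.
rewrite (sum_ord_false _ nj') deg_cast_id; apply: g_lower.
by rewrite ltn_neqAle (fig_hom_leq x) andbT; apply/eqP.
Qed.

Definition to_conc : FIGmor V (conc A) :=
  @FIGMor k G V (conc A) to_conc_fun to_conc_lin to_conc_nat.

End ToConc.

Section FromConc.
Variables (A : GnMod k G j) (h : FIGmor V (conc A)).

Definition conc_component (v : V j) : A := h j v ord_eqxx.

Lemma conc_component_lin : linear conc_component.
Proof.
move=> a u v; rewrite /conc_component.
by rewrite (lin_add (figmor_lin h j)) (lin_scale (figmor_lin h j)) !ffunE.
Qed.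

Lemma conc_component_act s v :
  conc_component (figact V s v) = gnact A s (conc_component v).
Proof.
by rewrite /conc_component figmor_nat /= ffunE (sum_ord_bool ord_eqxx) endo_cast_id.
Qed.

Lemma conc_component_lower i (y : FIGhom G i j) v :
  (i < j)%N -> conc_component (figact V y v) = 0.
Proof.
move=> lt_ij; rewrite /conc_component figmor_nat /= ffunE sum_ord_false //.
by apply/eqP => e; rewrite e ltnn in lt_ij.
Qed.

End FromConc.

End ConcentratedMorphisms.

Section H0Splitting.
Variables (k : comPzRingType) (G : groupType) (V : FIGmod k G).

Record is_H0_splitting j (sg : V j -> V j) : Prop := H0Splitting {
  splitting_lin : linear sg;
  splitting_act : forall s v, sg (figact V s v) = figact V s (sg v);
  splitting_act_lt : forall i (y : FIGhom G i j) v, (i < j)%N -> sg (figact V y v) = 0;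
  H0pi_splitting : forall v, H0pi (sg v) = H0pi v }.

Lemma H0pi_hom j : Gn_hom (A := deg_module V j) (B := H0mod V j) (@H0pi _ _ V j).
Proof. by split; [apply: H0pi_linear | move=> s v; rewrite /= H0actE]. Qed.

Lemma H0pi_act_lt i j (y : FIGhom G i j) v : (i < j)%N -> H0pi (figact V y v) = 0.
Proof. by move=> lt_ij; apply/H0pi_lower/lower_act_lt. Qed.

(* Lift [to_conc H0pi] through the epimorphism [conc V_j -> conc (H0 V j)]. *)
Lemma H0_splitting_exists j : FIG_projective V -> exists sg, @is_H0_splitting j sg.
Proof.
move=> V_proj.
have epi := conc_map_surj (H0pi_hom j) (fun c => ex_intro _ (H0repr c) (H0reprK c)).
have [h hh] := V_proj _ _ _
  (@to_conc _ _ _ _ (H0mod V j) _ (@H0pi_linear _ _ V j) (fun s v => esym (H0actE s v))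
     (@H0pi_act_lt^~ j)) epi.
exists (conc_component h); split.
- exact: (conc_component_lin h).
- exact: (conc_component_act h).
- exact: (conc_component_lower h).
- by move=> v; have := hh j v; move/ffunP/(_ ord_eqxx); rewrite !ffunE deg_cast_id.
Qed.

Section WithSplitting.
Variables (j : nat) (sg : V j -> V j).
Hypothesis sgP : is_H0_splitting sg.

Lemma splitting_lower v : lower v -> sg v = 0.
Proof.
move=> [s hs ->]; rewrite /term_sum (lin_sum (splitting_lin sgP)).
elim: s hs => [|t s IHs] /=; first by rewrite big_nil.
by rewrite big_cons => /andP[lt_t /IHs ->]; rewrite addr0 splitting_act_lt.
Qed.

Definition H0_lift (c : H0 V j) : V j := sg (H0repr c).

Lemma H0_liftE v : H0_lift (H0pi v) = sg v.
Proof.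
apply/eqP; rewrite -subr_eq0 -(lin_sub (splitting_lin sgP)) splitting_lower //.
by apply/H0piP; rewrite H0reprK.
Qed.

Lemma H0_lift_lin : linear H0_lift.
Proof.
move=> a; elim/H0_ind=> u; elim/H0_ind=> v.
rewrite -(lin_scale (@H0pi_linear _ _ V j)) -(lin_add (@H0pi_linear _ _ V j)) !H0_liftE.
by rewrite (lin_add (splitting_lin sgP)) (lin_scale (splitting_lin sgP)).
Qed.

Lemma H0_lift_act s c : H0_lift (gnact (H0mod V j) s c) = figact V s (H0_lift c).
Proof. by elim/H0_ind: c => v; rewrite /= H0actE !H0_liftE (splitting_act sgP). Qed.

Lemma H0pi_lift c : H0pi (H0_lift c) = c.
Proof. by rewrite /H0_lift (H0pi_splitting sgP) H0reprK. Qed.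

(* A G_j-map [f] out of [H0 V j] becomes a morphism [V -> conc B]; lifting it
   along [conc A -> conc B] by projectivity of [V] and precomposing with the
   splitting gives the required G_j-map into [A]. *)
Lemma H0mod_projective : FIG_projective V -> Gn_projective (H0mod V j).
Proof.
move=> V_proj A B p f p_hom [f_lin f_eq] p_surj.
have g_lin : linear (f \o @H0pi _ _ V j) := linear_comp f_lin (@H0pi_linear _ _ V j).
have g_eq s v : f (H0pi (figact V s v)) = gnact B s (f (H0pi v)).
  by rewrite -H0actE; apply: f_eq.
have g_lower i (y : FIGhom G i j) v : (i < j)%N -> f (H0pi (figact V y v)) = 0.
  by move=> lt_ij; rewrite H0pi_act_lt // (lin0 f_lin).
have [h hh] := V_proj _ _ (conc_map p_hom) (to_conc g_lin g_eq g_lower)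
  (conc_map_surj p_hom p_surj).
exists (conc_component h \o H0_lift); split; first split.
- exact: linear_comp (conc_component_lin h) H0_lift_lin.
- by move=> s c /=; rewrite H0_lift_act conc_component_act.
- elim/H0_ind=> v /=; rewrite H0_liftE.
  have := hh j (sg v); move/ffunP/(_ ord_eqxx); rewrite !ffunE deg_cast_id /=.
  by rewrite (H0pi_splitting sgP).
Qed.

End WithSplitting.

End H0Splitting.

Section SumOfM.
Variables (k : comPzRingType) (G : groupType) (W : forall i, GnMod k G i).

Definition Wcarrier (i : nat) : Type := W i.

Definition balanced_sum m (T : lmodType k) (gamma : forall i, FIGhom G i m -> W i -> T)
  (s : seq (figterm G Wcarrier m)) : T :=
  \sum_(t <- s) gamma (tdeg t) (thom t) (tvec t).

Definition msum_rel m (s1 s2 : seq (figterm G Wcarrier m)) : Prop :=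
  forall (T : lmodType k) (gamma : forall i, FIGhom G i m -> W i -> T),
    balanced_family gamma -> balanced_sum gamma s1 = balanced_sum gamma s2.

Definition terms_scale m (a : k) (s : seq (figterm G Wcarrier m)) :=
  [seq @FIGterm G Wcarrier m _ (thom t) (a *: (tvec t : W (tdeg t))) | t <- s].

Section BalancedSum.
Variables (m : nat) (T : lmodType k) (gamma : forall i, FIGhom G i m -> W i -> T).
Hypothesis gamma_bal : balanced_family gamma.

Lemma balanced_sum_cat s1 s2 :
  balanced_sum gamma (s1 ++ s2) = balanced_sum gamma s1 + balanced_sum gamma s2.
Proof. by rewrite /balanced_sum big_cat. Qed.

Lemma balanced_sum_scale a s :
  balanced_sum gamma (terms_scale a s) = a *: balanced_sum gamma s.
Proof.
rewrite /balanced_sum big_map scaler_sumr; apply: eq_bigr => t _.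
by rewrite (lin_scale (gamma_bal.1 _ _)).
Qed.

Lemma balanced_sum_opp s :
  balanced_sum gamma (terms_scale (-1) s) = - balanced_sum gamma s.
Proof. by rewrite balanced_sum_scale scaleN1r. Qed.

End BalancedSum.

Definition msum_prelmod (m : nat) : prelmod k.
refine (@PreLmod k (seq (figterm G Wcarrier m)) (@msum_rel m) [::] cat
  (@terms_scale m (-1)) (@terms_scale m) _ _ _ _ _ _ _ _ _ _ _ _ _ _).
- by [].
- by move=> x y h T g hg; rewrite (h T g hg).
- by move=> x y z h1 h2 T g hg; rewrite (h1 T g hg) (h2 T g hg).
- by move=> x x' y y' h1 h2 T g hg; rewrite !balanced_sum_cat (h1 T g hg) (h2 T g hg).
- by move=> x x' h T g hg; rewrite !balanced_sum_opp // (h T g hg).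
- by move=> a x x' h T g hg; rewrite !balanced_sum_scale // (h T g hg).
- by move=> x y z T g hg; rewrite catA.
- by move=> x y T g hg; rewrite !balanced_sum_cat addrC.
- by [].
- by move=> x T g hg;
    rewrite balanced_sum_cat balanced_sum_opp // addNr /balanced_sum big_nil.
- by move=> a b x T g hg; rewrite !balanced_sum_scale // scalerA.
- by move=> x T g hg; rewrite balanced_sum_scale // scale1r.
- by move=> a x y T g hg;
    rewrite balanced_sum_scale // !balanced_sum_cat !balanced_sum_scale // scalerDr.
- by move=> a b x T g hg; rewrite balanced_sum_cat !balanced_sum_scale // scalerDl.
Defined.

Definition msum (m : nat) : lmodType k := quot (msum_prelmod m).
Definition mpi m (s : seq (figterm G Wcarrier m)) : msum m := @qpi _ (msum_prelmod m) s.
Definition mrepr m (q : msum m) : seq (figterm G Wcarrier m) := @qrepr _ (msum_prelmod m) q.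

Lemma mpiP m (s1 s2 : seq (figterm G Wcarrier m)) : mpi s1 = mpi s2 <-> msum_rel s1 s2.
Proof. exact: qpiP. Qed.
Lemma mreprR m (s : seq (figterm G Wcarrier m)) : msum_rel (mrepr (mpi s)) s.
Proof. exact: (@qreprR _ (msum_prelmod m)). Qed.
Lemma msum_ind m (P : msum m -> Prop) : (forall s, P (mpi s)) -> forall q, P q.
Proof. exact: (@quot_ind _ (msum_prelmod m)). Qed.
Lemma mpi_cat m (s1 s2 : seq (figterm G Wcarrier m)) : mpi (s1 ++ s2) = mpi s1 + mpi s2.
Proof. exact: (@qpiD _ (msum_prelmod m)). Qed.
Lemma mpiZ m a (s : seq (figterm G Wcarrier m)) : mpi (terms_scale a s) = a *: mpi s.
Proof. exact: (@qpiZ _ (msum_prelmod m)). Qed.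
Lemma mpi_nil m : mpi [::] = 0 :> msum m.
Proof. by []. Qed.

Definition mgen m i (x : FIGhom G i m) (w : W i) : msum m := mpi [:: FIGterm x w].

Lemma mpi_cons m (t : figterm G Wcarrier m) s :
  mpi (t :: s) = mgen (thom t) (tvec t) + mpi s.
Proof. by case: t => i x w; rewrite -mpi_cat. Qed.

Lemma mgen_lin m i (x : FIGhom G i m) : linear (mgen x).
Proof.
move=> a u v; rewrite /mgen -mpiZ -mpi_cat; apply/mpiP => T g hg.
rewrite /balanced_sum /= !big_cons !big_nil !addr0 /= (lin_scale (hg.1 i x)).
exact: hg.1.
Qed.

Lemma mgen_bal m i (x : FIGhom G i m) (s : FIGhom G i i) w :
  mgen (fig_comp x s) w = mgen x (gnact (W i) s w).
Proof. by apply/mpiP => T g hg; rewrite /balanced_sum !big_seq1 hg.2. Qed.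

Definition msum_lift m (T : lmodType k) (gamma : forall i, FIGhom G i m -> W i -> T)
  (q : msum m) : T := balanced_sum gamma (mrepr q).

Section Lift.
Variables (m : nat) (T : lmodType k) (gamma : forall i, FIGhom G i m -> W i -> T).
Hypothesis gamma_bal : balanced_family gamma.

Lemma msum_liftE s : msum_lift gamma (mpi s) = balanced_sum gamma s.
Proof. exact: mreprR. Qed.

Lemma msum_lift_lin : linear (msum_lift gamma).
Proof.
move=> a; elim/msum_ind=> s1; elim/msum_ind=> s2.
by rewrite -mpiZ -mpi_cat !msum_liftE balanced_sum_cat balanced_sum_scale.
Qed.

Lemma msum_lift_gen i (x : FIGhom G i m) w : msum_lift gamma (mgen x w) = @gamma i x w.
Proof. by rewrite msum_liftE /balanced_sum big_seq1. Qed.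

End Lift.

Lemma msum_linear_eq m (T : lmodType k) (u1 u2 : msum m -> T) :
  linear u1 -> linear u2 ->
  (forall i (x : FIGhom G i m) w, u1 (mgen x w) = u2 (mgen x w)) -> u1 =1 u2.
Proof.
move=> l1 l2 h; elim/msum_ind; elim=> [|t s IH]; first by rewrite mpi_nil !lin0.
by rewrite mpi_cons (lin_add l1) (lin_add l2) IH h.
Qed.

Definition terms_comp n m (y : FIGhom G n m) (s : seq (figterm G Wcarrier n)) :=
  [seq @FIGterm G Wcarrier m _ (fig_comp y (thom t)) (tvec t) | t <- s].

Lemma balanced_sum_comp n m (y : FIGhom G n m) (T : lmodType k)
    (gamma : forall i, FIGhom G i m -> W i -> T) s :
  balanced_sum gamma (terms_comp y s) = balanced_sum (fun i x => gamma i (fig_comp y x)) s.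
Proof. by rewrite /balanced_sum big_map. Qed.

Lemma balanced_family_comp n m (y : FIGhom G n m) (T : lmodType k)
    (gamma : forall i, FIGhom G i m -> W i -> T) :
  balanced_family gamma -> balanced_family (fun i x => gamma i (fig_comp y x)).
Proof.
by move=> [g_lin g_bal]; split=> [i x | i x s w]; rewrite ?fig_compA ?g_bal.
Qed.

Definition msum_act n m (y : FIGhom G n m) (q : msum n) : msum m :=
  mpi (terms_comp y (mrepr q)).

Lemma msum_actE n m (y : FIGhom G n m) s : msum_act y (mpi s) = mpi (terms_comp y s).
Proof.
apply/mpiP => T g hg; rewrite !balanced_sum_comp.
exact: mreprR (balanced_family_comp y hg).
Qed.

Lemma msum_act_lin n m (y : FIGhom G n m) : linear (msum_act y).
Proof.
move=> a; elim/msum_ind=> s1; elim/msum_ind=> s2.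
rewrite -mpiZ -mpi_cat !msum_actE /terms_comp map_cat mpi_cat -mpiZ.
by rewrite /terms_scale -!map_comp.
Qed.

Lemma msum_act_id n (q : msum n) : msum_act (fig_id G n) q = q.
Proof.
elim/msum_ind: q => s; rewrite msum_actE /terms_comp; congr mpi.
by rewrite -[RHS]map_id; apply: eq_map => -[i x w]; rewrite /= fig_1comp.
Qed.

Lemma msum_act_comp n m p (x : FIGhom G m p) (y : FIGhom G n m) (q : msum n) :
  msum_act (fig_comp x y) q = msum_act x (msum_act y q).
Proof.
elim/msum_ind: q => s; rewrite !msum_actE /terms_comp -map_comp; congr mpi.
by apply: eq_map => -[i z w]; rewrite /= fig_compA.
Qed.

Lemma msum_act_gen n m (y : FIGhom G n m) i (x : FIGhom G i n) w :
  msum_act y (mgen x w) = mgen (fig_comp y x) w.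
Proof. by rewrite /mgen msum_actE. Qed.

Definition Msum : FIGmod k G :=
  @FIGMod k G msum msum_act msum_act_lin msum_act_id msum_act_comp.

End SumOfM.

Section Decomposition.
Variables (k : comPzRingType) (G : groupType) (V : FIGmod k G).
Variable sg : forall j, V j -> V j.
Arguments sg : clear implicits.
Hypothesis sgP : forall j, is_H0_splitting (sg j).
Local Notation W := (H0mod V).

Definition split_family i m (x : FIGhom G i m) (c : W i) : V m :=
  figact V x (H0_lift (sg i) c).

Lemma split_family_bal m : balanced_family (fun i => @split_family i m).
Proof.
split=> [i x | i x s c]; last by rewrite /split_family figact_comp H0_lift_act.
exact: linear_comp (figact_lin V x) (H0_lift_lin (sgP i)).
Qed.

Definition msum_to_V m : msum W m -> V m := msum_lift (fun i => @split_family i m).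

Lemma msum_to_V_lin m : linear (@msum_to_V m).
Proof. exact: msum_lift_lin (split_family_bal m). Qed.

Lemma msum_to_V_gen m i (x : FIGhom G i m) c :
  msum_to_V (mgen x c) = figact V x (H0_lift (sg i) c).
Proof. by rewrite /msum_to_V (msum_lift_gen (split_family_bal m)). Qed.

Lemma msum_to_V_nat n m (y : FIGhom G n m) (q : msum W n) :
  msum_to_V (figact (Msum W) y q) = figact V y (msum_to_V q).
Proof.
apply: (msum_linear_eq (linear_comp (@msum_to_V_lin m) (figact_lin (Msum W) y))
  (linear_comp (figact_lin V y) (@msum_to_V_lin n))) => i x c /=.
by rewrite msum_act_gen !msum_to_V_gen figact_comp.
Qed.

Definition MsumToV : FIGmor (Msum W) V :=
  @FIGMor k G (Msum W) V msum_to_V msum_to_V_lin msum_to_V_nat.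

(* [v - sg v] lies in the lower span, whose elements come from lower degrees. *)
Lemma msum_to_V_surj m (v : V m) : exists q, msum_to_V q = v.
Proof.
elim/ltn_ind: m v => m IH v.
have [s hs ev_s] : lower (v - sg m v).
  by rewrite -opprB; apply/lowerN/H0piP/(H0pi_splitting (sgP m)).
have [q hq] : exists q, msum_to_V q = term_sum s.
  elim: s hs {ev_s} => [|[i x w] s IHs] /=.
    by exists 0; rewrite /term_sum big_nil (lin0 (@msum_to_V_lin m)).
  move=> /andP[lt_im /IHs [q hq]]; have [qw hqw] := IH i lt_im w.
  exists (figact (Msum W) x qw + q).
  by rewrite (lin_add (@msum_to_V_lin m)) msum_to_V_nat hqw hq /term_sum big_cons.
exists (mgen (fig_id G m) (H0pi v : W m) + q).
rewrite (lin_add (@msum_to_V_lin m)) msum_to_V_gen figact_id (H0_liftE (sgP m)).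
by rewrite (hq : msum_to_V q = _) -ev_s addrC subrK.
Qed.

Lemma mgen_endo m (x : FIGhom G m m) c : mgen x c = mgen (fig_id G m) (gnact (W m) x c).
Proof. by rewrite -mgen_bal fig_1comp. Qed.

Lemma msum_decomp m (q : msum W m) : exists2 s : seq (figterm G (Wcarrier W) m),
  all (fun t => tdeg t < m)%N s & q - mgen (fig_id G m) (H0pi (msum_to_V q) : W m) = mpi s.
Proof.
have D_lin : linear (fun q => q - mgen (fig_id G m) (H0pi (@msum_to_V m q) : W m)).
  move=> a u v; rewrite (lin_add (@msum_to_V_lin m)) (lin_scale (@msum_to_V_lin m)).
  rewrite (lin_add (@H0pi_linear _ _ V m)) (lin_scale (@H0pi_linear _ _ V m)).
  rewrite (lin_add (mgen_lin (fig_id G m))) (lin_scale (mgen_lin (fig_id G m))).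
  by rewrite scalerBr opprD addrACA.
elim/msum_ind: q; elim=> [|t s [s' hs' es']].
  exists [::] => //; rewrite mpi_nil (lin0 (@msum_to_V_lin m)).
  by rewrite (lin0 (@H0pi_linear _ _ V m)) (lin0 (mgen_lin (fig_id G m))) subrr.
rewrite mpi_cons (lin_add D_lin) /= es'; case: t => i x c /=.
have [lt_im | le_mi] := ltnP i m.
  exists (FIGterm x c :: s'); first by rewrite /= lt_im.
  rewrite msum_to_V_gen H0pi_act_lt // (lin0 (mgen_lin (fig_id G m))) subr0.
  by rewrite [in RHS]mpi_cons.
have im := fig_endo_deg x le_mi; subst i; exists s' => //.
by rewrite msum_to_V_gen -H0actE (H0pi_lift (sgP m)) -mgen_endo subrr add0r.
Qed.

Section Retraction.
Variable psi : FIGmor V (Msum W).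
Hypothesis psiK : forall n v, msum_to_V (psi n v) = v.

Lemma psi_to_V m (q : msum W m) : psi m (msum_to_V q) = q.
Proof.
elim/ltn_ind: m q => m IH.
have psi_lin := figmor_lin psi m.
have pP_lin : linear (psi m \o @msum_to_V m) := linear_comp psi_lin (@msum_to_V_lin m).
have gen_lt i (x : FIGhom G i m) c : (i < m)%N -> psi m (msum_to_V (mgen x c)) = mgen x c.
  move=> lt_im.
  have -> : mgen x c = figact (Msum W) x (mgen (fig_id G i) c).
    by rewrite /= msum_act_gen fig_comp1.
  by rewrite msum_to_V_nat figmor_nat IH.
have sum_lt s : all (fun t => tdeg t < m)%N s -> psi m (msum_to_V (mpi s)) = mpi s.
  elim: s => [|[i x c] s IHs] /=.
    by rewrite mpi_nil (lin0 (@msum_to_V_lin m)) (lin0 psi_lin).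
  move=> /andP[lt_im hs].
  by rewrite mpi_cons (lin_add (@msum_to_V_lin m)) (lin_add psi_lin) IHs // gen_lt.
apply: (msum_linear_eq pP_lin (fun a u v => erefl)) => i x c /=.
have [lt_im | le_mi] := ltnP i m; first exact: gen_lt.
have im := fig_endo_deg x le_mi; subst i; rewrite mgen_endo.
set g0 := mgen _ _; pose z := g0 - psi m (msum_to_V g0).
have to_V_z : msum_to_V z = 0 by rewrite (lin_sub (@msum_to_V_lin m)) psiK subrr.
have [s hs] := msum_decomp z.
rewrite to_V_z (lin0 (@H0pi_linear _ _ V m)) (lin0 (mgen_lin (fig_id G m))) subr0 => ez.
have : psi m (msum_to_V z) = z by rewrite ez sum_lt.
by rewrite to_V_z (lin0 psi_lin) /z => /eqP; rewrite eq_sym subr_eq0 => /eqP.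
Qed.

Lemma is_sum_of_M_H0 : is_sum_of_M V W.
Proof.
exists split_family; split=> [|]; first exact: split_family_bal.
split=> [i m p h x c | m T gamma g_bal]; first by rewrite /split_family figact_comp.
have lift_lin := msum_lift_lin g_bal.
exists (msum_lift gamma \o psi m); split.
- exact: linear_comp lift_lin (figmor_lin psi m).
- by move=> i x w /=; rewrite /split_family -msum_to_V_gen psi_to_V (msum_lift_gen g_bal).
move=> u' u'_lin hu' v; rewrite -[in LHS](psiK v) /=.
apply: (msum_linear_eq (linear_comp u'_lin (@msum_to_V_lin m)) lift_lin) => i x c /=.
by rewrite msum_to_V_gen hu' (msum_lift_gen g_bal).
Qed.

End Retraction.

Lemma msum_to_V_split : FIG_projective V ->
  exists psi : FIGmor V (Msum W), forall n v, msum_to_V (psi n v) = v.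
Proof.
move=> V_proj; pose idV := @FIGMor k G V V (fun n v => v) (fun n a u v => erefl)
  (fun n m x v => erefl).
exact: V_proj _ _ MsumToV idV msum_to_V_surj.
Qed.

End Decomposition.

Section SumOfMProjective.
Variables (k : comPzRingType) (G : groupType) (V : FIGmod k G) (W : forall i, GnMod k G i).
Variable beta : forall i m, FIGhom G i m -> W i -> V m.
Arguments beta : clear implicits.
Hypothesis beta_bal : forall m, balanced_family (fun i => beta i m).
Hypothesis beta_comp : forall i m p (h : FIGhom G m p) (x : FIGhom G i m) (w : W i),
  figact V h (beta i m x w) = beta i p (fig_comp h x) w.
Hypothesis beta_univ :
  forall m (T : lmodType k) (gamma : forall i, FIGhom G i m -> W i -> T),
  balanced_family gamma ->
  exists u : V m -> T,
    [/\ linear u, (forall i x w, u (beta i m x w) = gamma i x w) &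
        (forall u' : V m -> T, linear u' ->
           (forall i x w, u' (beta i m x w) = gamma i x w) -> forall v, u' v = u v)].

Lemma beta_lin i m (x : FIGhom G i m) : linear (beta i m x).
Proof. exact: (beta_bal m).1. Qed.

Lemma beta_ext m (T : lmodType k) (u1 u2 : V m -> T) : linear u1 -> linear u2 ->
  (forall i x w, u1 (beta i m x w) = u2 (beta i m x w)) -> u1 =1 u2.
Proof.
move=> u1_lin u2_lin h12 v.
have bal : balanced_family (fun i x w => u1 (beta i m x w)).
  split=> [i x | i x s w]; first exact: linear_comp u1_lin (beta_lin x).
  by rewrite (beta_bal m).2.
have [u [_ _ u_uniq]] := beta_univ bal.
by rewrite (u_uniq u1) // (u_uniq u2) // => i x w; rewrite h12.
Qed.

Lemma beta_endo i (x : FIGhom G i i) w :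
  beta i i x w = figact V x (beta i i (fig_id G i) w).
Proof. by rewrite beta_comp fig_comp1. Qed.

Lemma sum_of_M_induced_mor (U : FIGmod k G) (h : forall i, W i -> U i) :
  (forall i, Gn_hom (A := W i) (B := deg_module U i) (h i)) ->
  exists H : FIGmor V U, forall i m x w, H m (beta i m x w) = figact U x (h i w).
Proof.
move=> h_hom; pose gam m i (x : FIGhom G i m) w := figact U x (h i w).
have gam_bal m : balanced_family (gam m).
  split=> [i x | i x s w]; first exact: linear_comp (figact_lin U x) (h_hom i).1.
  by rewrite /gam (h_hom i).2 figact_comp.
have [H HP] : exists H : forall m, V m -> U m, forall m, linear (H m) /\
    forall i x w, H m (beta i m x w) = gam m i x w.
  exists (fun m => sval (cid (beta_univ (gam_bal m)))) => m.
  by case: (cid _) => u [].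
have H_nat n m (y : FIGhom G n m) v : H m (figact V y v) = figact U y (H n v).
  apply: (beta_ext (linear_comp (HP m).1 (figact_lin V y))
    (linear_comp (figact_lin U y) (HP n).1)) => i x w /=.
  by rewrite beta_comp (HP m).2 (HP n).2 /gam figact_comp.
by exists (@FIGMor k G V U H (fun m => (HP m).1) H_nat) => i m x w /=; rewrite (HP m).2.
Qed.

Lemma sum_of_M_projective : (forall i, Gn_projective (W i)) -> FIG_projective V.
Proof.
move=> W_proj U Y p f p_surj.
have p_hom i : Gn_hom (A := deg_module U i) (B := deg_module Y i) (p i).
  by split=> [|s a]; [apply: figmor_lin | apply: figmor_nat].
have f_hom i : Gn_hom (A := W i) (B := deg_module Y i) (f i \o beta i i (fig_id G i)).
  split=> [|s w /=]; first exact: linear_comp (figmor_lin f i) (beta_lin _).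
  by rewrite -(beta_bal i).2 fig_1comp beta_endo figmor_nat.
have [h hP] : exists h : forall i, W i -> U i, forall i,
    Gn_hom (A := W i) (B := deg_module U i) (h i) /\
    forall w, p i (h i w) = f i (beta i i (fig_id G i) w).
  exists (fun i => sval (cid (W_proj i _ _ _ _ (p_hom i) (f_hom i) (p_surj i)))) => i.
  by case: (cid _).
have [H H_beta] := sum_of_M_induced_mor (fun i => (hP i).1).
exists H => m; apply: (beta_ext (linear_comp (figmor_lin p m) (figmor_lin H m))
  (figmor_lin f m)) => i x w /=.
by rewrite H_beta figmor_nat (hP i).2 -figmor_nat beta_comp fig_comp1.
Qed.

End SumOfMProjective.

Theorem mainTheorem18 (k : comPzRingType) (G : groupType) (V : FIGmod k G) :
  (FIG_projective V <->
     exists W : forall i, GnMod k G i,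
       (forall i, Gn_projective (W i)) /\ is_sum_of_M V W)
  /\ (FIG_projective V -> FIG_rel_projective V).
Proof.
have projective_sum : FIG_projective V -> exists W : forall i, GnMod k G i,
    (forall i, Gn_projective (W i)) /\ is_sum_of_M V W.
  move=> V_proj.
  have [sg sgP] : exists sg : forall j, V j -> V j, forall j, is_H0_splitting (sg j).
    exists (fun j => sval (cid (H0_splitting_exists j V_proj))) => j.
    by case: (cid _).
  have [psi psiK] := msum_to_V_split sgP V_proj.
  exists (H0mod V); split; first by move=> j; apply: H0mod_projective.
  exact: is_sum_of_M_H0 psiK.
split; last by move=> /projective_sum [W [_ VW]]; exists W.
split=> // -[W [W_proj [beta [beta_bal [beta_comp beta_univ]]]]].
exact: sum_of_M_projective beta_bal beta_comp beta_univ W_proj.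
Qed.
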